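(* Let $N\ge 3$, write $N=2g+1$ or $N=2g+2$ with $g\ge 1$, and let $(v_n(x))_{n\in\mathbf Z}$ be a solution of the $N$-periodic dressing chain (see context). Let $T(\lambda)=\begin{pmatrix}A(\lambda)&B(\lambda)\\ C(\lambda)&D(\lambda)\end{pmatrix}$ be its transition matrix, $P(\lambda)=\operatorname{Tr}T(\lambda)$, $Q(\lambda)=\det T(\lambda)$. Suppose that, at the values of $x$ considered, the $g$ zeros $\lambda_1,\dots,\lambda_g$ of $B(\lambda)$ are pairwise distinct (and depend differentiably on $x$), and put $z_j=A(\lambda_j)$, assumed nonzero. Then for $j=1,\dots,g$, $$\dot\lambda_j=\frac{z_j-Q(\lambda_j)z_j^{-1}}{B'(\lambda_j)},\qquad \dot z_j=\frac{P'(\lambda_j)z_j-Q'(\lambda_j)}{B'(\lambda_j)},$$ where the dot denotes $d/dx$ and the prime denotes $\partial/\partial\lambda$.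
   Context: Fix constants $\alpha_1,\dots,\alpha_N$, extended $N$-periodically ($\alpha_{n+N}=\alpha_n$); put $\alpha=\sum_{n=1}^N\alpha_n$, $\beta_n=\alpha_1+\cdots+\alpha_n$, $\beta_0=0$. A solution of the $N$-periodic dressing chain is a family of functions $v_n(x)$, $n\in\mathbf Z$, with $v_{n+N}=v_n$ and $\dot v_n+\dot v_{n+1}=v_{n+1}^2-v_n^2+\alpha_n$ for all $n$. Put $v=v_1+\cdots+v_N$ (then $\dot v=\alpha/2$). Let $V_n(\lambda)=\begin{pmatrix}v_n&1\\ \lambda+v_n^2&v_n\end{pmatrix}$ and define the transition matrix $T(\lambda)=V_N(\lambda+\beta_{N-1})\cdots V_2(\lambda+\beta_1)V_1(\lambda)$. Then $Q(\lambda)=\det T(\lambda)=(-1)^N\lambda\prod_{n=1}^{N-1}(\lambda+\beta_n)$, and $B(\lambda)$ is a polynomial of degree $g$ with leading coefficient $b_0=1$ if $N=2g+1$ and $b_0=v$ if $N=2g+2$. *)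

From HB Require Import structures.
From mathcomp Require Import all_boot all_order all_algebra.
From mathcomp Require Import all_classical all_reals all_analysis.
Set Implicit Arguments. Unset Strict Implicit. Unset Printing Implicit Defensive.
Import Order.TTheory GRing.Theory Num.Theory.
Import numFieldNormedType.Exports.
Local Open Scope ring_scope.

Section Dressing.
Variable K : numFieldType.

Definition beta (alpha : nat -> K) (n : nat) : K := \sum_(1 <= k < n.+1) alpha k.

(* V_n(lambda + c) as a 2x2 matrix of polynomials in lambda, at the point x *)
Definition Vmat (v : nat -> K -> K) (n : nat) (c : K) (x : K) : 'M[{poly K}]_2 :=
  \matrix_(i < 2, j < 2)
    (if (i == 0%N :> nat) && (j == 0%N :> nat) then (v n x)%:P
     else if (i == 0%N :> nat) then 1
     else if (j == 0%N :> nat) then 'X + (c + v n x ^+ 2)%:P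
     else (v n x)%:P).

Fixpoint Tpart (alpha : nat -> K) (v : nat -> K -> K) (n : nat) (x : K)
  : 'M[{poly K}]_2 :=
  match n with
  | 0 => 1%:M
  | m.+1 => Vmat v m.+1 (beta alpha m) x *m Tpart alpha v m x
  end.

Definition Tmat (N : nat) alpha v x := Tpart alpha v N x.
Definition Apol N alpha v x : {poly K} := Tmat N alpha v x 0 0.
Definition Bpol N alpha v x : {poly K} := Tmat N alpha v x 0 1.
Definition Cpol N alpha v x : {poly K} := Tmat N alpha v x 1 0.
Definition Dpol N alpha v x : {poly K} := Tmat N alpha v x 1 1.
Definition Ppol N alpha v x : {poly K} := \tr (Tmat N alpha v x).
Definition Qpol N alpha v x : {poly K} := \det (Tmat N alpha v x).

Definition dressing_chain (N : nat) (alpha : nat -> K) (v : nat -> K -> K) :=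
  (forall n, alpha (n + N)%N = alpha n) /\
  (forall n, v (n + N)%N = v n) /\
  (forall n x, derivable (v n) x 1) /\
  (forall n x, derive1 (v n) x + derive1 (v n.+1) x
               = v n.+1 x ^+ 2 - v n x ^+ 2 + alpha n).

End Dressing.

From HB Require Import structures.
From mathcomp Require Import all_boot all_order all_algebra.
From mathcomp Require Import all_classical all_reals all_analysis.
From mathcomp Require Import ring zify.
Set Implicit Arguments.
Unset Strict Implicit.
Unset Printing Implicit Defensive.
Import Order.TTheory GRing.Theory Num.Theory.
Import numFieldNormedType.Exports.
Local Open Scope ring_scope.

(* The dressing chain is the zero-curvature condition
   V_n' = U_(n+1) V_n - V_n U_n  with  U_n = [[0, 1], [l + beta_(n-1) + v_n^2 - v_n', 0]],
   so the products telescope to T' = U_(N+1) T - T U_1.  Since the first row of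
   every U_n is (0, 1), the first row of this equation reads B' = D - A and
   A' = C - B u_1, coefficientwise in l.  Differentiating B(x, l_j(x)) = 0 gives
   B'(l_j) dl_j/dx = A(l_j) - D(l_j), and D(l_j) = Q(l_j)/z_j because Q = AD - BC;
   differentiating z_j = A(x, l_j(x)) and eliminating with the same relations gives
   dz_j/dx.  The roots are simple because B has degree at most g and g distinct roots. *)

Section Mx22.
Variable R : Type.

Definition mx22 (a b c d : R) : 'M[R]_2 :=
  \matrix_(i < 2, j < 2)
    if i == 0%N :> nat then (if j == 0%N :> nat then a else b)
    else if j == 0%N :> nat then c else d.

Lemma mx22_eta (M : 'M[R]_2) : M = mx22 (M 0 0) (M 0 1) (M 1 0) (M 1 1).
Proof.
apply/matrixP => i j; rewrite mxE.
by case: i j => [[|[|//]] ?] [[|[|//]] ?]; congr (M _ _); apply: val_inj.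
Qed.

End Mx22.

Lemma mulmx22 (R : pzSemiRingType) (a b c d a' b' c' d' : R) :
  mx22 a b c d *m mx22 a' b' c' d'
  = mx22 (a * a' + b * c') (a * b' + b * d') (c * a' + d * c') (c * b' + d * d').
Proof.
apply/matrixP => i j; rewrite !mxE !big_ord_recr big_ord0 /= add0r !mxE.
by case: i j => [[|[|//]] ?] [[|[|//]] ?].
Qed.

Lemma mx22B (R : zmodType) (a b c d a' b' c' d' : R) :
  mx22 (a - a') (b - b') (c - c') (d - d') = mx22 a b c d - mx22 a' b' c' d'.
Proof.
apply/matrixP => i j; rewrite !mxE.
by case: i j => [[|[|//]] ?] [[|[|//]] ?].
Qed.

Lemma det2 (R : comPzRingType) (M : 'M[R]_2) :
  \det M = M 0 0 * M 1 1 - M 0 1 * M 1 0.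
Proof.
rewrite (expand_det_row _ 0) !big_ord_recr big_ord0 /= add0r /cofactor !det_mx11.
rewrite [M]mx22_eta !mxE /= expr0 expr1; ring.
Qed.

Lemma mxtrace2 (R : nmodType) (M : 'M[R]_2) : \tr M = M 0 0 + M 1 1.
Proof.
by rewrite /mxtrace !big_ord_recr big_ord0 /= add0r [M]mx22_eta !mxE.
Qed.

Lemma size_mul_add_leq (R : nzSemiRingType) (a b p q : {poly R}) n :
  ((size a + size p).-1 <= n)%N -> ((size b + size q).-1 <= n)%N ->
  (size (a * p + b * q)%R <= n)%N.
Proof.
move=> h1 h2; apply: leq_trans (size_polyD _ _) _.
by rewrite geq_max (leq_trans (size_polyMleq _ _) h1) (leq_trans (size_polyMleq _ _) h2).
Qed.

Lemma horner_deriv_wide (R : comNzRingType) (p : {poly R}) n x : (size p <= n)%N ->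
  p^`().[x] = \sum_(i < n) p`_i * (i%:R * x ^+ i.-1).
Proof.
move=> sp; have sdp : (size p^`() <= n)%N.
  by apply/leq_sizeP => k hk; rewrite coef_deriv (leq_sizeP _ _ sp) ?mul0rn // ltnW.
rewrite (horner_coef_wide _ sdp).
have -> : \sum_(i < n) p`_i * (i%:R * x ^+ i.-1)
        = \sum_(i < n.+1) p`_i * (i%:R * x ^+ i.-1).
  by rewrite big_ord_recr /= (leq_sizeP _ _ sp) // mul0r addr0.
rewrite big_ord_recl /= mulr0n mul0r mulr0 add0r.
by apply: eq_bigr => i _; rewrite coef_deriv -mulr_natr /bump /= add1n; ring.
Qed.

Lemma deriv_root_neq0 (F : idomainType) (B : {poly F}) g (r : 'I_g -> F) j :
  B != 0 -> (size B <= g.+1)%N -> injective r -> (forall k, root B (r k)) ->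
  B^`().[r j] != 0.
Proof.
move=> B0 sB r_inj Br.
have /factor_theorem [q Bq] := Br j.
have q0 : q != 0 by apply: contraNneq B0 => q0; rewrite Bq q0 mul0r.
have sq : (size q <= g)%N.
  by move: sB; rewrite Bq size_Mmonic ?monicXsubC // size_XsubC addn2.
rewrite Bq derivM derivXsubC mulr1 !hornerE subrr mulr0 add0r.
apply/negP => /eqP qj.
suff : (size [seq r k | k <- enum 'I_g] < size q)%N.
  by rewrite size_map size_enum_ord ltnNge sq.
apply: max_poly_roots => //; last by rewrite map_inj_uniq ?enum_uniq.
apply/allP => _ /mapP [k _ ->].
have [->|kj] := eqVneq k j; first by rewrite /root qj.
have := Br k; rewrite Bq /root hornerM hornerXsubC mulf_eq0 subr_eq0.
by rewrite (inj_eq r_inj) (negbTE kj) orbF.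
Qed.

Lemma dubrovin_equations (F : fieldType) (A B C D c : {poly F}) (l dl : F) :
  B.[l] = 0 -> A.[l] != 0 -> B^`().[l] != 0 ->
  (D - A).[l] + B^`().[l] * dl = 0 ->
  dl = (A.[l] - (A * D - B * C).[l] / A.[l]) / B^`().[l] /\
  (C - B * c).[l] + A^`().[l] * dl
    = ((A + D)^`().[l] * A.[l] - (A * D - B * C)^`().[l]) / B^`().[l].
Proof.
move=> Bl0 Al0 dBl0 hdl.
have {}hdl : dl = (A.[l] - D.[l]) / B^`().[l].
  by rewrite -[_ - _]add0r -hdl hornerD hornerN; field.
rewrite hdl derivD derivB !derivM !(hornerD, hornerN, hornerM) Bl0.
by split; field; rewrite ?dBl0 ?Al0.
Qed.

Section CoefficientwiseDerivative.
Variables (K : numFieldType) (x0 : K).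

Definition is_derive_coef (p : K -> {poly K}) (dp : {poly K}) :=
  forall k, is_derive x0 1 (fun x => (p x)`_k) dp`_k.

Lemma eq_is_derive_coef p q dp :
  p =1 q -> is_derive_coef q dp -> is_derive_coef p dp.
Proof. by move=> /funext ->. Qed.

Lemma is_derive_coef_cst p : is_derive_coef (fun=> p) 0.
Proof. by move=> k; rewrite coef0; exact: is_derive_cst. Qed.

Lemma is_derive_coefC (c : K -> K) dc :
  is_derive x0 1 c dc -> is_derive_coef (fun x => (c x)%:P) dc%:P.
Proof.
move=> h [|k]; rewrite coefC /=.
  by have -> : (fun x => (c x)%:P`_0) = c by apply/funext => x; rewrite coefC.
have -> : (fun x => (c x)%:P`_k.+1) = cst 0 by apply/funext => x; rewrite coefC.
exact: is_derive_cst.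
Qed.

Lemma is_derive_coefD p q dp dq :
  is_derive_coef p dp -> is_derive_coef q dq ->
  is_derive_coef (fun x => p x + q x) (dp + dq).
Proof.
move=> hp hq k; rewrite coefD.
have -> : (fun x => (p x + q x)`_k) = (fun x => (p x)`_k) + (fun x => (q x)`_k).
  by apply/funext => x; rewrite coefD.
exact: is_deriveD.
Qed.

Lemma is_derive_coef_sum n (F : 'I_n -> K -> {poly K}) dF :
  (forall i, is_derive_coef (F i) (dF i)) ->
  is_derive_coef (fun x => \sum_(i < n) F i x) (\sum_(i < n) dF i).
Proof.
move=> h k; rewrite coef_sum.
have -> : (fun x => (\sum_(i < n) F i x)`_k) = \sum_(i < n) (fun x => (F i x)`_k).
  by apply/funext => x; rewrite coef_sum fct_sumE.
by apply: (@is_derive_sum _ _ _ n (fun i x => (F i x)`_k)) => i; exact: h.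
Qed.

Lemma is_derive_coefM p q dp dq :
  is_derive_coef p dp -> is_derive_coef q dq ->
  is_derive_coef (fun x => p x * q x) (dp * q x0 + p x0 * dq).
Proof.
move=> hp hq k; rewrite coefD !coefM -big_split /=.
have -> : (fun x => (p x * q x)`_k) =
          \sum_(j < k.+1) ((fun x => (p x)`_j) * (fun x => (q x)`_(k - j))).
  by apply/funext => x; rewrite coefM fct_sumE.
apply: is_derive_eq; first by apply: is_derive_sum => j; exact: is_deriveM.
by apply: eq_bigr => j _ /=; rewrite /GRing.scale /=; ring.
Qed.

Lemma size_is_derive_coef p dp n :
  is_derive_coef p dp -> (forall x, size (p x) <= n)%N -> (size dp <= n)%N.
Proof.
move=> hp sp; apply/leq_sizeP => k hk.
have p_k0 : (fun x => (p x)`_k) = cst 0.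
  by apply/funext => x; apply: (leq_sizeP _ _ (sp x)).
by case: (hp k) => _; rewrite p_k0 derive_cst => <-.
Qed.

Lemma is_derive_coef_horner p dp n (l : K -> K) dl :
  is_derive_coef p dp -> (forall x, size (p x) <= n)%N -> is_derive x0 1 l dl ->
  is_derive x0 1 (fun x => (p x).[l x]) (dp.[l x0] + (p x0)^`().[l x0] * dl).
Proof.
move=> hp sp hl.
have -> : (fun x => (p x).[l x]) = \sum_(i < n) (fun x => (p x)`_i * l x ^+ i).
  by apply/funext => x; rewrite (horner_coef_wide _ (sp x)) fct_sumE.
have hpl (i : 'I_n) : is_derive x0 1 (fun x => (p x)`_i * l x ^+ i)
    ((p x0)`_i * ((i%:R * l x0 ^+ i.-1) * dl) + l x0 ^+ i * dp`_i).
  by have := is_deriveM (hp i) (is_deriveX i hl); rewrite exprfctE.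
apply: is_derive_eq (is_derive_sum hpl) _.
rewrite (horner_coef_wide _ (size_is_derive_coef hp sp)) (horner_deriv_wide _ (sp x0)).
by rewrite big_distrl -big_split /=; apply: eq_bigr => i _; ring.
Qed.

Definition is_derive_mx m n
    (M : K -> 'M[{poly K}]_(m, n)) (dM : 'M[{poly K}]_(m, n)) :=
  forall i j, is_derive_coef (fun x => M x i j) (dM i j).

Lemma is_derive_mx_cst m n (M : 'M[{poly K}]_(m, n)) : is_derive_mx (fun=> M) 0.
Proof. by move=> i j; rewrite mxE; exact: is_derive_coef_cst. Qed.

Lemma is_derive_mxM m n r
    (M : K -> 'M[{poly K}]_(m, n)) (N : K -> 'M[{poly K}]_(n, r)) dM dN :
  is_derive_mx M dM -> is_derive_mx N dN ->
  is_derive_mx (fun x => M x *m N x) (dM *m N x0 + M x0 *m dN).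
Proof.
move=> hM hN i j; rewrite !mxE -big_split /=.
apply: (@eq_is_derive_coef _ (fun x => \sum_l M x i l * N x l j)) => [x|].
  by rewrite mxE.
by apply: is_derive_coef_sum => l; exact: is_derive_coefM.
Qed.

Lemma is_derive_mx22 a b c d da db dc dd :
  is_derive_coef a da -> is_derive_coef b db ->
  is_derive_coef c dc -> is_derive_coef d dd ->
  is_derive_mx (fun x => mx22 (a x) (b x) (c x) (d x)) (mx22 da db dc dd).
Proof.
move=> ha hb hc hd i j; rewrite mxE.
case: i j => [[|[|//]] ?] [[|[|//]] ?] /=;
  [apply: eq_is_derive_coef ha | apply: eq_is_derive_coef hb |
   apply: eq_is_derive_coef hc | apply: eq_is_derive_coef hd] => x; by rewrite mxE.
Qed.

End CoefficientwiseDerivative.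

Section LaxEquation.
Variables (K : numFieldType) (x0 : K) (alpha : nat -> K) (v : nat -> K -> K).
Hypothesis v_derivable : forall n x, derivable (v n) x 1.
Hypothesis chain : forall n x,
  derive1 (v n) x + derive1 (v n.+1) x = v n.+1 x ^+ 2 - v n x ^+ 2 + alpha n.

Local Notation vd n := ('D_1 (v n) x0).

Lemma alpha_chain n : alpha n = vd n + vd n.+1 - v n.+1 x0 ^+ 2 + v n x0 ^+ 2.
Proof. by rewrite -!derive1E chain; ring. Qed.

Lemma betaS n : beta alpha n.+1 = beta alpha n + alpha n.+1.
Proof. by rewrite /beta big_nat_recr. Qed.

Lemma Vmat_mx22 n c x :
  Vmat v n c x = mx22 (v n x)%:P 1 ('X + (c + v n x ^+ 2)%:P) (v n x)%:P.
Proof.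
by apply/matrixP => i j; rewrite !mxE; case: i j => [[|[|//]] ?] [[|[|//]] ?].
Qed.

Definition dVmx n := mx22 (vd n)%:P 0 (v n x0 * vd n *+ 2)%:P (vd n)%:P.

Lemma is_derive_Vmat n c : is_derive_mx x0 (Vmat v n c) (dVmx n).
Proof.
have hv : is_derive x0 1 (v n) (vd n) by exact: derivableP.
have hc : is_derive x0 1 (fun x => c + v n x ^+ 2) (v n x0 * vd n *+ 2).
  have := is_deriveD (is_derive_cst c x0 1) (is_deriveX 2 hv).
  by rewrite add0r /GRing.scale /= => /is_derive_eq; apply; rewrite expr1 mulr2n; ring.
rewrite (funext (Vmat_mx22 n c)) /dVmx.
apply: is_derive_mx22; [exact: is_derive_coefC | exact: is_derive_coef_cst | |
  exact: is_derive_coefC].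
rewrite -[_%:P]add0r.
exact: is_derive_coefD (is_derive_coef_cst _ _) (is_derive_coefC hc).
Qed.

Definition Umx n := mx22 0 1 ('X + (beta alpha n.-1 + v n x0 ^+ 2 - vd n)%:P) 0.

Lemma dVmx_zero_curvature n :
  dVmx n.+1 = Umx n.+2 *m Vmat v n.+1 (beta alpha n) x0
              - Vmat v n.+1 (beta alpha n) x0 *m Umx n.+1.
Proof.
rewrite Vmat_mx22 !mulmx22 -mx22B /= betaS alpha_chain.
by congr mx22; rewrite ?(polyCD, polyCN, polyCB, polyCM, polyCMn, polyC_exp); ring.
Qed.

Lemma is_derive_Tpart n :
  is_derive_mx x0 (Tpart alpha v n)
    (Umx n.+1 *m Tpart alpha v n x0 - Tpart alpha v n x0 *m Umx 1).
Proof.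
elim: n => [|n IHn].
  by rewrite /= mulmx1 mul1mx subrr; exact: is_derive_mx_cst.
set T := Tpart alpha v n x0 in IHn *; set V := Vmat v n.+1 (beta alpha n) x0.
have -> : Umx n.+2 *m (V *m T) - (V *m T) *m Umx 1
          = dVmx n.+1 *m T + V *m (Umx n.+1 *m T - T *m Umx 1).
  by rewrite dVmx_zero_curvature mulmxBl mulmxBr !mulmxA addrA subrK.
exact: is_derive_mxM (is_derive_Vmat _ _) IHn.
Qed.

Lemma is_derive_Bpol N :
  is_derive_coef x0 (Bpol N alpha v) (Dpol N alpha v x0 - Apol N alpha v x0).
Proof.
have := is_derive_Tpart N 0 1.
rewrite /Bpol /Dpol /Apol /Tmat [Tpart alpha v N x0]mx22_eta !mulmx22 -mx22B !mxE /=.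
by rewrite mul0r mul1r mulr1 mulr0 add0r addr0.
Qed.

Lemma is_derive_Apol N :
  is_derive_coef x0 (Apol N alpha v) (Cpol N alpha v x0
    - Bpol N alpha v x0 * ('X + (beta alpha 0 + v 1 x0 ^+ 2 - vd 1)%:P)).
Proof.
have := is_derive_Tpart N 0 0.
rewrite /Cpol /Bpol /Apol /Tmat [Tpart alpha v N x0]mx22_eta !mulmx22 -mx22B !mxE /=.
by rewrite mul0r mul1r mulr0 !add0r.
Qed.

End LaxEquation.

Lemma size_Tpart (K : numFieldType) (alpha : nat -> K) (v : nat -> K -> K) n x :
  let T := Tpart alpha v n x in
  [/\ (size (T 0 0)%R <= n./2 + 1)%N, (size (T 0 1)%R <= n.+1./2)%N,
      (size (T 1 0)%R <= n.+1./2 + 1)%N & (size (T 1 1)%R <= n./2 + 1)%N].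
Proof.
elim: n => [|n [s00 s01 s10 s11]]; first by rewrite /= !mxE /= size_poly1 size_poly0.
rewrite /= Vmat_mx22 [Tpart alpha v n x]mx22_eta mulmx22 !mxE /=.
have sC := size_polyC_leq1 (v n.+1 x); have sX c := size_XaddC c.
split; apply: size_mul_add_leq; rewrite ?sX ?size_poly1.
all: move: sC s00 s01 s10 s11; rewrite ?uphalfE -?subn1; lia.
Qed.

Lemma size_Bpol (K : numFieldType) N (alpha : nat -> K) v x :
  (size (Bpol N alpha v x) <= N.+1./2)%N.
Proof. by case: (size_Tpart alpha v N x). Qed.

Lemma size_Apol (K : numFieldType) N (alpha : nat -> K) v x :
  (size (Apol N alpha v x) <= N./2 + 1)%N.
Proof. by case: (size_Tpart alpha v N x). Qed.

Theorem mainTheorem1 (K : numFieldType) (N : nat) (alpha : nat -> K)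
  (v : nat -> K -> K) (lam : 'I_((N.-1)./2) -> K -> K) (x0 : K) :
  (3 <= N)%N ->
  dressing_chain N alpha v ->
  Bpol N alpha v x0 != 0 ->
  (forall j, \forall x \near x0, (Bpol N alpha v x).[lam j x] = 0) ->
  (forall j, derivable (lam j) x0 1) ->
  injective (fun j => lam j x0) ->
  (forall j, (Apol N alpha v x0).[lam j x0] != 0) ->
  forall j,
    let l := lam j x0 in
    let z := (Apol N alpha v x0).[l] in
    let dB := (deriv (Bpol N alpha v x0)).[l] in
    is_derive x0 1 (lam j)
      ((z - (Qpol N alpha v x0).[l] / z) / dB) /\
    is_derive x0 1 (fun x => (Apol N alpha v x).[lam j x])
      (((deriv (Ppol N alpha v x0)).[l] * z - (deriv (Qpol N alpha v x0)).[l]) / dB).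
Proof.
move=> _ [_ [_ [v_der chain]]] B0 Broot lam_der lam_inj Az0 j l z dB.
have hl := derivableP (lam_der j).
have Bl0 k : (Bpol N alpha v x0).[lam k x0] = 0 := nbhs_singleton (Broot k).
have dBl0 : dB != 0.
  apply: (deriv_root_neq0 (r := fun k => lam k x0)) => // [|k]; last exact/eqP.
  by apply: leq_trans (size_Bpol _ _ _ _) _; rewrite -subn1; lia.
have hB := is_derive_coef_horner (is_derive_Bpol x0 v_der chain N)
  (@size_Bpol _ N alpha v) hl.
have hA := is_derive_coef_horner (is_derive_Apol x0 v_der chain N)
  (@size_Apol _ N alpha v) hl.
have hB0 : (Dpol N alpha v x0 - Apol N alpha v x0).[l] + dB * 'D_1 (lam j) x0 = 0.
  by case: (near_eq_is_derive (Broot j) hB) => _ <-; exact: derive_cst.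
have dub := dubrovin_equations (Cpol N alpha v x0) _ (Bl0 j) (Az0 j) dBl0 hB0.
rewrite /Qpol /Ppol det2 mxtrace2.
by split; [exact: is_derive_eq hl (proj1 (dub 0)) |
           exact: is_derive_eq hA (proj2 (dub _))].
Qed.
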